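(* For every $k\ge 1$, the bi-hypergraph obtained from $\mathcal H_{2k+1}$ by adding a new vertex $v$, removing the edge $\{v_{1,1},v_{1,2},v_{1,3}\}$, and adding the edges $\{v,v_{2k+1,i},v_{2k+1,i+1}\}$ for $i\in[2]$ and $\{v,v_{1,j},v_{2k+1,j}\}$ for $j\in[3]$ is minimal uncolorable.
   Context: A bi-hypergraph $\mathcal H=(V,E)$ consists of a finite vertex set $V$ and a set $E$ of subsets of $V$, called edges, with no edge contained in another. A mapping $f:V\to\mathbb N$ is a proper coloring of $\mathcal H$ if $1<|f(e)|<|e|$ for every $e\in E$, where $f(e)=\{f(v):v\in e\}$. $\mathcal H$ is colorable if it has a proper coloring, and uncolorable otherwise. A subhypergraph of $\mathcal H$ is a bi-hypergraph $(V',E')$ with $V'\subseteq V$, $E'\subseteq E$; $\mathcal H$ is minimal uncolorable if it is uncolorable but every proper subhypergraph of it is colorable. For $k\ge 2$, $\mathcal H_k$ is the $3$-uniform bi-hypergraph with vertex set $\{v_{i,j}: i\in[k], j\in[3]\}$ (all distinct), with the convention $v_{i,4}=v_{i,1}$, $v_{i,5}=v_{i,2}$, whose edges are the sets $\{v_{i,1},v_{i,2},v_{i,3}\}$ for all $i\in[k]$ and the sets $\{v_{q+1,j},v_{q,j},v_{q,j+t}\}$ for all $q\in[k-1]$, $j\in[3]$, $t\in\{1,2\}$. *)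

From mathcomp Require Import all_boot.
Set Implicit Arguments. Unset Strict Implicit. Unset Printing Implicit Defensive.

Definition hypergraph (T : finType) : Type := ({set T} * {set {set T}})%type.

Definition is_bihypergraph (T : finType) (H : hypergraph T) : Prop :=
  (forall e, e \in H.2 -> e \subset H.1) /\
  (forall e1 e2, e1 \in H.2 -> e2 \in H.2 -> e1 \subset e2 -> e1 = e2).

Definition proper_coloring (T : finType) (H : hypergraph T) (f : T -> nat) : Prop :=
  forall e, e \in H.2 ->
    1 < size (undup [seq f x | x <- enum e]) < #|e|.

Definition colorable (T : finType) (H : hypergraph T) : Prop :=
  exists f : T -> nat, proper_coloring H f.

Definition subhypergraph (T : finType) (H' H : hypergraph T) : Prop :=
  is_bihypergraph H' /\ H'.1 \subset H.1 /\ H'.2 \subset H.2.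

Definition minimal_uncolorable (T : finType) (H : hypergraph T) : Prop :=
  is_bihypergraph H /\ ~ colorable H /\
  (forall H', subhypergraph H' H -> H' <> H -> colorable H').

(* Ambient type: Some (i, j) is v_{i+1, j+1}; None is an extra vertex v. *)
Definition Vt (m : nat) : finType := option ('I_m.+1 * 'I_3)%type.

(* v_{i,j} with 1-based indices i in [m+1], j in [5], with v_{i,4}=v_{i,1},
   v_{i,5}=v_{i,2}. *)
Definition vx (m i j : nat) : Vt m := Some (inord i.-1, inord (j.-1 %% 3)).

Definition newv (m : nat) : Vt m := None.

Definition triangle (m i : nat) : {set Vt m} := [set vx m i 1; vx m i 2; vx m i 3].

Definition H_vertices (m : nat) : {set Vt m} := [set x : Vt m | x != None].

Definition H_edges (m : nat) : {set {set Vt m}} :=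
  [set e : {set Vt m} |
     [exists i : 'I_m.+1, e == triangle m i.+1] ||
     [exists q : 'I_m, exists j : 'I_3, exists t : 'I_2,
        e == [set vx m q.+2 j.+1; vx m q.+1 j.+1; vx m q.+1 (j.+1 + t.+1)]]].

Definition H_ (m : nat) : hypergraph (Vt m) := (H_vertices m, H_edges m).

Definition G_edges (m : nat) : {set {set Vt m}} :=
  (H_edges m :\ triangle m 1)
  :|: [set [set newv m; vx m m.+1 i.+1; vx m m.+1 i.+2] | i : 'I_2]
  :|: [set [set newv m; vx m 1 j.+1; vx m m.+1 j.+1] | j : 'I_3].

Definition G_ (m : nat) : hypergraph (Vt m) := (H_vertices m :|: [set newv m], G_edges m).

From mathcomp Require Import all_boot zify.
Set Implicit Arguments. Unset Strict Implicit. Unset Printing Implicit Defensive.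

(* A coloring of G is read as rows of colors, row r holding the colors of
   v_{r,1}, v_{r,2}, v_{r,3}, plus the color w of v.  All edges have three
   vertices, so an edge is properly colored iff it sees exactly two colors.
   The link edges between rows r and r+1 are so restrictive that three
   consecutive two-colored rows satisfy row (r+2) = row r, while after a
   monochromatic row all later two-colored rows avoid its color.  As 2k+1 is
   odd, either row 2k+1 equals row 1, or row 1 is monochromatic and row 2k+1
   avoids its color; in both cases the five edges through v cannot all see
   two colors.  Conversely G minus any single edge is colored explicitly:
   rows alternate between a 0/1 row and its complement, switching pattern at
   a removed link edge, and for a removed triangle that row is made
   monochromatic.  Since every vertex lies on an edge, a proper
   subhypergraph misses an edge. *)

Definition two_colored (a b c : nat) : bool := 1 < size (undup [:: a; b; c]) < 3.

Lemma two_coloredP a b c :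
  reflect ((a = b /\ b <> c) \/ (b = c /\ a <> b) \/ (a = c /\ a <> b)) (two_colored a b c).
Proof.
rewrite /two_colored /= !inE.
case: (eqVneq a b) => [->|hab]; case: (eqVneq b c) => [->|hbc]; rewrite ?eqxx /=;
  try case: (eqVneq a c) => [?|hac]; subst; rewrite ?eqxx ?inE /=; constructor; try lia.
Qed.

Lemma not_two_coloredP a b c :
  ~~ two_colored a b c -> (a = b /\ b = c) \/ (a <> b /\ b <> c /\ a <> c).
Proof. move/two_coloredP; lia. Qed.

Ltac case_two_colored := repeat match goal with H : is_true (two_colored _ _ _) |- _ =>
  case/two_coloredP: H => [[? ?]|[[? ?]|[? ?]]]; subst; try congruence end.

(** * Rows of a coloring *)

Definition row := (nat * nat * nat)%type.

Definition entry (x : row) (j : nat) : nat :=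
  match j with 0 => x.1.1 | 1 => x.1.2 | _ => x.2 end.

Definition mono (c : nat) : row := (c, c, c).

Definition two_colored_row (x : row) : bool := two_colored (entry x 0) (entry x 1) (entry x 2).

Definition link_edge_ok (x y : row) (j t : nat) : bool :=
  two_colored (entry y j) (entry x j) (entry x ((j + t.+1) %% 3)).

Definition linked (x y : row) : bool :=
  all (fun j => all (link_edge_ok x y j) (iota 0 2)) (iota 0 3).

Lemma linkedP x y :
  reflect (forall j t, j < 3 -> t < 2 -> link_edge_ok x y j t) (linked x y).
Proof.
apply: (iffP allP) => [h j t hj ht | h j].
  by apply/(allP (h j _)); rewrite mem_iota; lia.
rewrite mem_iota => hj; apply/allP => t; rewrite mem_iota => ht; apply: h; lia.
Qed.

Definition avoids (c : nat) (x : row) : Prop :=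
  [/\ entry x 0 <> c, entry x 1 <> c & entry x 2 <> c].

Definition cap_ok (w : nat) (y : row) (i : nat) : bool := two_colored w (entry y i) (entry y i.+1).

Definition spoke_ok (w : nat) (x y : row) (j : nat) : bool := two_colored w (entry x j) (entry y j).

Definition apex_ok (w : nat) (x y : row) : bool :=
  [&& cap_ok w y 0, cap_ok w y 1, spoke_ok w x y 0, spoke_ok w x y 1 & spoke_ok w x y 2].

Lemma linked_two_colored_return x y z :
  two_colored_row x -> two_colored_row y -> two_colored_row z ->
  linked x y -> linked y z -> z = x.
Proof.
case: x => [[x0 x1] x2]; case: y => [[y0 y1] y2]; case: z => [[z0 z1] z2].
rewrite /two_colored_row /linked /link_edge_ok /= !andbT.
move=> ? ? ? /and3P [/andP [? ?] /andP [? ?] /andP [? ?]]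
  /and3P [/andP [? ?] /andP [? ?] /andP [? ?]].
case_two_colored; congruence.
Qed.

Lemma linked_from_monochrome x y :
  ~~ two_colored_row x -> two_colored_row y -> linked x y ->
  x = mono (entry x 0) /\ avoids (entry x 0) y.
Proof.
case: x => [[x0 x1] x2]; case: y => [[y0 y1] y2].
rewrite /two_colored_row /linked /link_edge_ok /avoids /= !andbT.
move=> /not_two_coloredP [[? ?]|[? [? ?]]] ? /and3P [/andP [? ?] /andP [? ?] /andP [? ?]];
  by subst; case_two_colored; split=> //; split; congruence.
Qed.

Lemma linked_avoids c y z :
  two_colored_row y -> two_colored_row z -> avoids c y -> linked y z -> avoids c z.
Proof.
case: y => [[y0 y1] y2]; case: z => [[z0 z1] z2].
rewrite /two_colored_row /linked /link_edge_ok /avoids /= !andbT.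
move=> ? ? [? ? ?] /and3P [/andP [? ?] /andP [? ?] /andP [? ?]].
case_two_colored; split; congruence.
Qed.

Lemma apex_not_ok_same_row w x : two_colored_row x -> ~~ apex_ok w x x.
Proof.
case: x => [[x0 x1] x2]; rewrite /two_colored_row /apex_ok /cap_ok /spoke_ok /=.
by move=> ?; apply/negP => /and5P [? ? ? ? ?]; case_two_colored.
Qed.

Lemma apex_not_ok_from_monochrome w c y :
  two_colored_row y -> avoids c y -> ~~ apex_ok w (mono c) y.
Proof.
case: y => [[y0 y1] y2]; rewrite /two_colored_row /avoids /apex_ok /cap_ok /spoke_ok /=.
by move=> ? [? ? ?]; apply/negP => /and5P [? ? ? ? ?]; case_two_colored.
Qed.

(** * Uncolorability *)

Section Ladder.
Variables (n : nat) (rows : nat -> row).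
Hypothesis rows_two_colored : forall i, 2 <= i <= n -> two_colored_row (rows i).
Hypothesis rows_linked : forall q, 1 <= q < n -> linked (rows q) (rows q.+1).

Lemma ladder_odd_rows_return :
  two_colored_row (rows 1) -> forall p, p.*2.+1 <= n -> rows p.*2.+1 = rows 1.
Proof.
move=> tc1; elim=> [//|p IHp] hp.
have {}IHp : rows p.*2.+1 = rows 1 by apply: IHp; lia.
rewrite -IHp; apply: (@linked_two_colored_return _ (rows p.*2.+2)).
- by rewrite IHp.
- by apply: rows_two_colored; lia.
- by rewrite doubleS; apply: rows_two_colored; lia.
- by apply: rows_linked; lia.
- by rewrite doubleS; apply: rows_linked; lia.
Qed.

Lemma ladder_avoids_first_color :
  avoids (entry (rows 1) 0) (rows 2) -> forall i, 2 <= i <= n -> avoids (entry (rows 1) 0) (rows i).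
Proof.
move=> av2; elim=> [//|i IHi] hi.
have [->|i_gt1] := eqVneq i 1; first exact: av2.
apply: (linked_avoids _ _ (IHi _)); try lia.
- by apply: rows_two_colored; lia.
- by apply: rows_two_colored; lia.
- by apply: rows_linked; lia.
Qed.

End Ladder.

(* The edges of G for n = 2k+1 rows; row indices are 1-based and column
   indices 0-based: [Tri i] is {v_{i,1},v_{i,2},v_{i,3}}, [Link q j t] is
   {v_{q+1,j+1}, v_{q,j+1}, v_{q,j+t+2}}, [Cap i] is {v, v_{n,i+1}, v_{n,i+2}}
   and [Spoke j] is {v, v_{1,j+1}, v_{n,j+1}}. *)
Inductive edge_code := Tri of nat | Link of nat & nat & nat | Cap of nat | Spoke of nat.

Definition valid_code (n : nat) (c : edge_code) : bool :=
  match c with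
  | Tri i => 2 <= i <= n
  | Link q j t => [&& 1 <= q < n, j < 3 & t < 2]
  | Cap i => i < 2
  | Spoke j => j < 3
  end.

Definition code_ok (n : nat) (rows : nat -> row) (w : nat) (c : edge_code) : bool :=
  match c with
  | Tri i => two_colored_row (rows i)
  | Link q j t => link_edge_ok (rows q) (rows q.+1) j t
  | Cap i => cap_ok w (rows n) i
  | Spoke j => spoke_ok w (rows 1) (rows n) j
  end.

Lemma ladder_uncolorable n rows w :
  odd n -> 3 <= n -> ~ (forall c, valid_code n c -> code_ok n rows w c).
Proof.
move=> odd_n n_ge3 ok.
have tri i : 2 <= i <= n -> two_colored_row (rows i) by move=> hi; exact: (ok (Tri i)).
have link q : 1 <= q < n -> linked (rows q) (rows q.+1).
  by move=> hq; apply/linkedP => j t hj ht; apply: (ok (Link q j t)); rewrite /= hq hj ht.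
have apex : apex_ok w (rows 1) (rows n).
  by apply/and5P; split; [apply: (ok (Cap 0)) | apply: (ok (Cap 1)) | apply: (ok (Spoke 0))
                         | apply: (ok (Spoke 1)) | apply: (ok (Spoke 2))].
have [tc1 | ntc1] := boolP (two_colored_row (rows 1)).
  have n_half : n./2.*2.+1 = n by rewrite -[RHS]odd_double_half odd_n addnC addn1.
  have rows_n : rows n = rows 1.
    by rewrite -n_half; apply: (ladder_odd_rows_return tri link tc1); rewrite n_half.
  by move: apex; rewrite rows_n; apply/negP/apex_not_ok_same_row.
have tri2 : two_colored_row (rows 2) by apply: tri; lia.
have link1 : linked (rows 1) (rows 2) by apply: link; lia.
have tri_n : two_colored_row (rows n) by apply: tri; lia.
have [row1 av2] := linked_from_monochrome ntc1 tri2 link1.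
have av_n : avoids (entry (rows 1) 0) (rows n).
  by apply: (ladder_avoids_first_color tri link av2); lia.
by move: apex; rewrite row1; apply/negP/apex_not_ok_from_monochrome.
Qed.

(** * Colorings of G with one edge removed *)

Definition binary (x : row) : bool := [&& entry x 0 <= 1, entry x 1 <= 1 & entry x 2 <= 1].

Definition compl_row (x : row) : row := (1 - x.1.1, 1 - x.1.2, 1 - x.2).

Lemma entry_compl x j : entry (compl_row x) j = 1 - entry x j.
Proof. by case: j => [|[|j]]. Qed.

Lemma binary_compl x : binary (compl_row x).
Proof. by rewrite /binary !entry_compl !leq_subr. Qed.

Lemma compl_rowK x : binary x -> compl_row (compl_row x) = x.
Proof. by case: x => [[[|[|?]] [|[|?]]] [|[|?]]]. Qed.

Lemma two_colored_compl a b c :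
  a <= 1 -> b <= 1 -> c <= 1 -> two_colored (1 - a) (1 - b) (1 - c) = two_colored a b c.
Proof. by case: a b c => [|[|?]] [|[|?]] [|[|?]]. Qed.

Lemma two_colored_row_compl x : binary x -> two_colored_row (compl_row x) = two_colored_row x.
Proof. by move=> /and3P [? ? ?]; rewrite /two_colored_row !entry_compl two_colored_compl. Qed.

Lemma binary_entry x j : binary x -> entry x j <= 1.
Proof. by case/and3P; case: j => [|[|j]]. Qed.

Lemma link_edge_ok_compl x y j t : binary x -> binary y ->
  link_edge_ok (compl_row x) (compl_row y) j t = link_edge_ok x y j t.
Proof. by move=> bx b_y; rewrite /link_edge_ok !entry_compl two_colored_compl ?binary_entry. Qed.

Lemma linked_compl x : binary x -> linked x (compl_row x).
Proof. by case: x => [[[|[|?]] [|[|?]]] [|[|?]]]. Qed.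

Lemma linked_compl_inv x : binary x -> linked (compl_row x) x.
Proof. by move=> bx; rewrite -{2}(compl_rowK bx); apply/linked_compl/binary_compl. Qed.

Definition alternating (q0 : nat) (B A : row) (r : nat) : row :=
  let x := if r <= q0 then B else A in if odd r then x else compl_row x.

(* A 0/1 row is linked to its complement in both directions, so only the
   rung at q0, where the pattern switches from B to A, is constrained. *)
Lemma alternating_code_ok n q0 B A w c :
  odd n -> 1 <= q0 <= n -> binary B -> binary A ->
  two_colored_row B -> two_colored_row A -> valid_code n c ->
  code_ok n (alternating q0 B A) w c =
  match c with
  | Tri _ => true
  | Link q j t => (q != q0) || link_edge_ok B (compl_row A) j t
  | Cap i => cap_ok w (if q0 == n then B else A) i
  | Spoke j => spoke_ok w B (if q0 == n then B else A) j
  end.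
Proof.
move=> odd_n hq0 bB bA tB tA; rewrite /alternating.
have q0_n : (n <= q0) = (q0 == n) by lia.
case: c => [i|q j t|i|j] /= hc.
- by case: (i <= q0); case: (odd i); rewrite ?two_colored_row_compl.
- case/and3P: hc => hq hj ht.
  have [_|_|->] := ltngtP q q0.
  + by case: (odd q) => /=; apply/linkedP => //; [apply: linked_compl | apply: linked_compl_inv].
  + by case: (odd q) => /=; apply/linkedP => //; [apply: linked_compl | apply: linked_compl_inv].
  + by case: (odd q0) => //=; rewrite -link_edge_ok_compl ?binary_compl ?compl_rowK.
- by rewrite odd_n q0_n.
- by case/andP: hq0 => -> _; rewrite odd_n q0_n.
Qed.

Definition colorable_without (n : nat) (c0 : edge_code) : Prop :=
  exists rows w, forall c, valid_code n c -> c <> c0 -> code_ok n rows w c.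

Lemma cap_removal_colorable n i0 : odd n -> 1 <= n -> i0 < 2 -> colorable_without n (Cap i0).
Proof.
move=> odd_n n_pos hi0.
have [B [bB tB capB]] : exists B,
    [/\ binary B, two_colored_row B & forall i, i < 2 -> i != i0 -> cap_ok 2 B i].
  by case: i0 hi0 => [|[|]] // _; [exists (0, 1, 1) | exists (1, 1, 0)]; split=> // [[|[|]]].
exists (alternating n B B), 2 => c hc hne.
rewrite alternating_code_ok ?leqnn ?eqxx ?n_pos //.
case: c hc hne => [i|q j t|i|j] //= hc hne.
- by rewrite orbC; lia.
- by apply: capB => //; apply/eqP => Ei; apply: hne; rewrite Ei.
- by rewrite /spoke_ok; have := binary_entry j bB; case: (entry B j) => [|[|]].
Qed.

Lemma spoke_removal_colorable n j0 : odd n -> 1 <= n -> j0 < 3 -> colorable_without n (Spoke j0).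
Proof.
move=> odd_n n_pos hj0.
have [B [bB tB capB spokeB]] : exists B, [/\ binary B, two_colored_row B,
    forall i, i < 2 -> cap_ok 0 B i & forall j, j < 3 -> j != j0 -> spoke_ok 0 B B j].
  by case: j0 hj0 => [|[|[|]]] // _; [exists (0, 1, 1) | exists (1, 0, 1) | exists (1, 1, 0)];
    split=> // [[|[|]] | [|[|[|]]]].
exists (alternating n B B), 0 => c hc hne.
rewrite alternating_code_ok ?leqnn ?eqxx ?n_pos //.
case: c hc hne => [i|q j t|i|j] //= hc hne.
- by rewrite orbC; lia.
- exact: capB.
- by apply: spokeB => //; apply/eqP => Ei; apply: hne; rewrite Ei.
Qed.

Lemma link_removal_colorable n q0 j0 t0 :
  odd n -> 1 <= q0 < n -> j0 < 3 -> t0 < 2 -> colorable_without n (Link q0 j0 t0).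
Proof.
move=> odd_n hq0 hj0 ht0.
have [B [A [w [/and4P [bB bA tB tA] apexBA linkBA]]]] : exists B A w,
    [/\ [&& binary B, binary A, two_colored_row B & two_colored_row A], apex_ok w B A &
     forall j t, j < 3 -> t < 2 -> (j, t) != (j0, t0) -> link_edge_ok B (compl_row A) j t].
  case: j0 hj0 => [|[|[|]]] // _; case: t0 ht0 => [|[|]] // _;
  [ exists (0, 0, 1), (1, 0, 0), 1 | exists (0, 1, 0), (1, 0, 0), 1
  | exists (0, 1, 1), (1, 0, 1), 0 | exists (0, 0, 1), (0, 1, 0), 1
  | exists (0, 1, 0), (0, 0, 1), 1 | exists (0, 1, 1), (1, 1, 0), 0 ];
  by split=> // [[|[|[|]]] [|[|]]].
exists (alternating q0 B A), w => c hc hne.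
have q0_n : (q0 == n) = false by lia.
rewrite alternating_code_ok ?q0_n //; last by lia.
case: c hc hne => [i|q j t|i|j] //= hc hne.
- case/and3P: hc => _ hj ht; have [q_q0|] //= := eqVneq q q0.
  by apply: linkBA => //; apply/eqP => -[Ej Et]; apply: hne; rewrite q_q0 Ej Et.
- by move: apexBA => /and5P []; case: i hc {hne} => [|[|]].
- by move: apexBA => /and5P []; case: j hc {hne} => [|[|[|]]].
Qed.

Definition abb (a b : nat) : row := (a, b, b).

(* Row 1, whose triangle is not an edge of G, and row i0 are monochromatic.
   In between the rows use the colors 1, 2 and end with [abb 2 1], which
   (unlike [abb 1 2]) is linked to [mono 2]; after i0 they use 0, 1. *)
Definition missing_triangle_rows (i0 r : nat) : row :=
  if r == 1 then mono 0
  else if r < i0 then (if odd (i0 - r) then abb 2 1 else abb 1 2)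
  else if r == i0 then mono 2
  else if odd r then abb 1 0 else abb 0 1.

Lemma missing_triangle_rows_linked i0 q :
  2 <= i0 -> 1 <= q -> linked (missing_triangle_rows i0 q) (missing_triangle_rows i0 q.+1).
Proof.
move=> hi0 hq; rewrite /missing_triangle_rows (_ : q.+1 == 1 = false); last by lia.
have [->|q_gt1] := eqVneq q 1.
  by have [_|i0_lt2|_] := ltngtP 2 i0; [case: odd | lia | ].
have [q_lt|_|<-] := ltngtP q.+1 i0.
- by rewrite (_ : i0 - q = (i0 - q.+1).+1) /=; [case: odd | lia].
- by case: (q == i0); rewrite /= ?oddS; case: odd.
- by rewrite subSnn.
Qed.

Lemma triangle_removal_colorable n i0 : odd n -> 2 <= i0 <= n -> colorable_without n (Tri i0).
Proof.
move=> odd_n hi0.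
exists (missing_triangle_rows i0), (if i0 == n then 0 else 1) => c hc hne.
have n_i0 : (n < i0) = false by lia.
case: c hc hne => [i|q j t|i|j] /= hc hne; rewrite /missing_triangle_rows.
- have i_i0 : (i == i0) = false by apply/eqP => Ei; apply: hne; rewrite Ei.
  by rewrite (_ : i == 1 = false) ?i_i0; [case: (i < i0); case: odd | lia].
- by case/and3P: hc => hq hj ht; apply/linkedP => //; apply: missing_triangle_rows_linked; lia.
- rewrite (_ : n == 1 = false) ?n_i0 ?odd_n (eq_sym n); last by lia.
  by case: eqP; case: i hc {hne} => [|[|]].
- rewrite (_ : n == 1 = false) ?n_i0 ?odd_n (eq_sym n); last by lia.
  by case: eqP; case: j hc {hne} => [|[|[|]]].
Qed.

Lemma removal_colorable n c0 : odd n -> 3 <= n -> valid_code n c0 -> colorable_without n c0.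
Proof.
move=> odd_n n_ge3; case: c0 => [i0|q0 j0 t0|i0|j0] /= hc0.
- exact: triangle_removal_colorable.
- by case/and3P: hc0 => *; apply: link_removal_colorable.
- by apply: cap_removal_colorable => //; lia.
- by apply: spoke_removal_colorable => //; lia.
Qed.

(** * The hypergraph G *)

Definition proper_edge (T : finType) (f : T -> nat) (e : {set T}) : bool :=
  1 < size (undup [seq f x | x <- enum e]) < #|e|.

Lemma perm_enum_set3 (T : finType) (a b c : T) : a != b -> a != c -> b != c ->
  perm_eq (enum [set a; b; c]) [:: a; b; c].
Proof.
move=> ab ac bc; apply: uniq_perm; first exact: enum_uniq.
  by rewrite /= !inE negb_or ab ac bc.
by move=> x; rewrite mem_enum !inE orbA.
Qed.

Lemma card_set3 (T : finType) (a b c : T) : a != b -> a != c -> b != c -> #|[set a; b; c]| = 3.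
Proof. by move=> ab ac bc; rewrite cardE (perm_size (perm_enum_set3 ab ac bc)). Qed.

Lemma proper_edge_set3 (T : finType) (f : T -> nat) (a b c : T) : a != b -> a != c -> b != c ->
  proper_edge f [set a; b; c] = two_colored (f a) (f b) (f c).
Proof.
move=> ab ac bc; rewrite /proper_edge card_set3 // /two_colored.
suff -> : size (undup [seq f x | x <- enum [set a; b; c]]) = size (undup [:: f a; f b; f c]) by [].
apply/perm_size/perm_undup => x.
by rewrite (perm_mem (perm_map f (perm_enum_set3 ab ac bc))).
Qed.

Section Encoding.
Variable m : nat.

Lemma vx_eq i i' j j' : 0 < i <= m.+1 -> 0 < i' <= m.+1 ->
  (vx m i j == vx m i' j') = (i == i') && (j.-1 %% 3 == j'.-1 %% 3).
Proof.
move=> hi hi'.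
rewrite /vx (inj_eq (@Some_inj _)) xpair_eqE -!(inj_eq val_inj) /= !inordK ?ltn_mod //; lia.
Qed.

Lemma vx_mod i j : vx m i (j %% 3).+1 = vx m i j.+1.
Proof. by rewrite /vx /= modn_mod. Qed.

Lemma Some_vx (a : 'I_m.+1) (b : 'I_3) : Some (a, b) = vx m a.+1 b.+1.
Proof. by rewrite /vx /=; congr (Some (_, _)); apply: val_inj; rewrite /= inordK ?modn_small. Qed.

Definition code_edge (c : edge_code) : {set Vt m} :=
  match c with
  | Tri i => triangle m i
  | Link q j t => [set vx m q.+1 j.+1; vx m q j.+1; vx m q (j.+1 + t.+1)]
  | Cap i => [set newv m; vx m m.+1 i.+1; vx m m.+1 i.+2]
  | Spoke j => [set newv m; vx m 1 j.+1; vx m m.+1 j.+1]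
  end.

Lemma code_edge_neq_triangle1 c : valid_code m.+1 c -> code_edge c != triangle m 1.
Proof.
case: c => [i|q j t|i|j] /= hc; apply/negP => /eqP E.
- have : vx m i 1 \in triangle m 1 by rewrite -E !inE eqxx.
  rewrite !inE !vx_eq //; lia.
- have : vx m q.+1 j.+1 \in triangle m 1 by rewrite -E !inE eqxx.
  rewrite !inE !vx_eq //; lia.
- by move/setP/(_ (newv m)): E; rewrite !inE.
- by move/setP/(_ (newv m)): E; rewrite !inE.
Qed.

Lemma G_edgesP e :
  reflect (exists2 c, valid_code m.+1 c & e = code_edge c) (e \in G_edges m).
Proof.
rewrite /G_edges !inE; apply: (iffP idP).
- case/orP => [/orP [/andP [e_ne /orP [/existsP [i /eqP Ei] |
    /existsP [q /existsP [j /existsP [t /eqP ->]]]]] | /imsetP [i _ ->]] | /imsetP [j _ ->]].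
  + exists (Tri i.+1) => //=; move: e_ne; rewrite Ei; have := ltn_ord i.
    by case: (nat_of_ord i) => [|i'] /=; [rewrite eqxx | lia].
  + exists (Link q.+1 j t) => //=.
    by have := ltn_ord q; have := ltn_ord j; have := ltn_ord t; lia.
  + by exists (Cap i); rewrite /= ?ltn_ord.
  + by exists (Spoke j); rewrite /= ?ltn_ord.
- case=> c hc ->; have := code_edge_neq_triangle1 hc.
  case: c hc => [i|q j t|i|j] /= hc ->.
  + apply/orP; left; apply/orP; left; apply/orP; left; apply/existsP.
    by exists (inord i.-1); rewrite inordK ?prednK //; lia.
  + apply/orP; left; apply/orP; left; apply/orP; right; case/and3P: hc => hq hj ht.
    have hq' : q.-1 < m by lia.
    apply/existsP; exists (Ordinal hq'); apply/existsP; exists (Ordinal hj).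
    by apply/existsP; exists (Ordinal ht); rewrite /= prednK //; lia.
  + by apply/orP; left; apply/orP; right; apply/imsetP; exists (Ordinal hc).
  + by apply/orP; right; apply/imsetP; exists (Ordinal hc).
Qed.

Lemma vertex_in_code_edge x : exists2 c, valid_code m.+1 c & x \in code_edge c.
Proof.
case: x => [[a b]|]; last by exists (Spoke 0); rewrite //= !inE eqxx.
rewrite Some_vx; case: (posnP a) => [a0|a_pos].
  by exists (Spoke b); rewrite /= ?ltn_ord // a0 !inE eqxx orbT.
exists (Tri a.+1); first by rewrite /= ltn_ord; lia.
by rewrite /= /triangle !inE; case: b => [[|[|[|]]] ?] //=; rewrite eqxx ?orbT.
Qed.

Definition rows_of (f : Vt m -> nat) (r : nat) : row := (f (vx m r 1), f (vx m r 2), f (vx m r 3)).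

Lemma entry_rows_of f r j : j < 3 -> entry (rows_of f r) j = f (vx m r j.+1).
Proof. by case: j => [|[|[|]]]. Qed.

Definition coloring_of (rows : nat -> row) (w : nat) (x : Vt m) : nat :=
  if x is Some (a, b) then entry (rows a.+1) b else w.

Lemma rows_of_coloring_of rows w r : 0 < r <= m.+1 -> rows_of (coloring_of rows w) r = rows r.
Proof.
move=> hr; rewrite /rows_of /coloring_of /vx /= !inordK ?prednK //; try lia.
by case: (rows r) => [[]].
Qed.

Hypothesis m_pos : 0 < m.

Lemma code_edge_set3 c : valid_code m.+1 c -> exists a b d,
  [/\ code_edge c = [set a; b; d], a != b, a != d & b != d].
Proof.
case: c => [i|q j t|i|j] /= hc; do 3 eexists; (split; first reflexivity); rewrite ?vx_eq //; lia.
Qed.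

Lemma card_code_edge c : valid_code m.+1 c -> #|code_edge c| = 3.
Proof. by case/code_edge_set3 => [a [b [d [-> ab ad bd]]]]; apply: card_set3. Qed.

Lemma proper_code_edge f c : valid_code m.+1 c ->
  proper_edge f (code_edge c) = code_ok m.+1 (rows_of f) (f (newv m)) c.
Proof.
case: c => [i|q j t|i|j] /= hc.
- by rewrite /triangle proper_edge_set3 ?vx_eq //; lia.
- case/and3P: hc => hq hj ht.
  rewrite proper_edge_set3 ?vx_eq; try lia.
  by rewrite /link_edge_ok !entry_rows_of ?ltn_pmod // vx_mod addSn.
- by rewrite proper_edge_set3 ?vx_eq /cap_ok ?entry_rows_of //; lia.
- by rewrite proper_edge_set3 ?vx_eq /spoke_ok ?entry_rows_of //; lia.
Qed.

End Encoding.

Lemma eq_code_ok n rows rows' w c : 0 < n -> valid_code n c ->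
  (forall r, 0 < r <= n -> rows r = rows' r) -> code_ok n rows w c = code_ok n rows' w c.
Proof.
move=> n_pos; case: c => [i|q j t|i|j] /= hc eq_rows.
- by rewrite eq_rows //; lia.
- by case/and3P: hc => hq _ _; rewrite !eq_rows //; lia.
- by rewrite eq_rows //; lia.
- by rewrite !eq_rows //; lia.
Qed.

Section G.
Variable m : nat.
Hypothesis m_ge2 : 2 <= m.

Lemma G_vertices x : x \in (G_ m).1.
Proof. by rewrite !inE; case: x. Qed.

Lemma G_bihypergraph : is_bihypergraph (G_ m).
Proof.
split=> [e _ | _ _ /G_edgesP [c1 hc1 ->] /G_edgesP [c2 hc2 ->] sub12].
  by apply/subsetP => x _; apply: G_vertices.
by apply/eqP; rewrite eqEcard sub12 !card_code_edge //; lia.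
Qed.

Lemma G_uncolorable : odd m.+1 -> ~ colorable (G_ m).
Proof.
move=> odd_n [f f_proper].
apply: (@ladder_uncolorable m.+1 (rows_of f) (f (newv m)) odd_n); first lia.
move=> c hc; rewrite -proper_code_edge //; last by lia.
by apply/f_proper/G_edgesP; exists c.
Qed.

Lemma subhypergraph_with_all_edges H' :
  subhypergraph H' (G_ m) -> G_edges m \subset H'.2 -> H' = G_ m.
Proof.
case: H' => V' E' [[sub_V' _] [_ sub_E']] /= all_E.
have E'_G : E' = G_edges m by apply/eqP; rewrite eqEsubset sub_E' all_E.
suff -> : V' = (G_ m).1 by rewrite E'_G.
apply/setP => x; rewrite G_vertices; have [c hc x_in] := vertex_in_code_edge x.
apply: (subsetP (sub_V' _ _)) x_in.
by rewrite E'_G; apply/G_edgesP; exists c.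
Qed.

Lemma G_proper_subhypergraph_colorable H' :
  odd m.+1 -> subhypergraph H' (G_ m) -> H' <> G_ m -> colorable H'.
Proof.
move=> odd_n subH' neq.
have [all_E | /subsetPn [e0 e0_G e0_notin]] := boolP (G_edges m \subset H'.2).
  by case: neq; apply: subhypergraph_with_all_edges.
case/G_edgesP: e0_G e0_notin => c0 hc0 -> c0_notin.
have n_ge3 : 3 <= m.+1 by lia.
have [rows [w rows_ok]] := removal_colorable odd_n n_ge3 hc0.
exists (coloring_of rows w) => e e_in.
have /G_edgesP [c hc e_c] := subsetP subH'.2.2 e e_in.
have := proper_code_edge (ltnW m_ge2) (coloring_of rows w) hc; rewrite /proper_edge -e_c => ->.
rewrite (@eq_code_ok _ _ rows) // => [|r hr]; last exact: rows_of_coloring_of.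
by apply: rows_ok => // c_c0; move: c0_notin; rewrite -c_c0 -e_c e_in.
Qed.

End G.

Theorem mainTheorem18 (k : nat) (hk : 1 <= k) : minimal_uncolorable (G_ k.*2).
Proof.
have m_ge2 : 2 <= k.*2 by rewrite -(doubleS 0) leq_double.
have odd_n : odd k.*2.+1 by rewrite /= odd_double.
split; [exact: G_bihypergraph | split].
- exact: G_uncolorable.
- by move=> H' subH' neq; apply: G_proper_subhypergraph_colorable.
Qed.
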